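(* Let $k\geq 2$ be an integer. The function $F^k$ is increasing on the interval $(2(k-1),\infty)$.
   Context: For a positive integer $k$, define $F^k:(0,\infty)\to\mathbb{R}$ by $F^k(x)=\delta_0^k(x)-k(x-k)-1$, where $\delta_0^k(x)=2x\sum_{j=1}^{k/2}\cos\left(\frac{(k-(2j-1))\pi}{x}\right)$ if $k$ is even, and $\delta_0^k(x)=x+2x\sum_{j=1}^{(k-1)/2}\cos\left(\frac{(k-(2j-1))\pi}{x}\right)$ if $k$ is odd (an empty sum is $0$). *)

From Stdlib Require Import Reals.
Open Scope R_scope.

Fixpoint cos_sum (k : nat) (x : R) (m : nat) : R :=
  match m with
  | O => 0
  | S m' => cos_sum k x m' + cos ((INR k - (2 * INR m - 1)) * PI / x)
  end.

Definition delta0 (k : nat) (x : R) : R :=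
  if Nat.even k then 2 * x * cos_sum k x (Nat.div2 k)
  else x + 2 * x * cos_sum k x (Nat.div2 k).

Definition Fk (k : nat) (x : R) : R :=
  delta0 k x - INR k * (x - INR k) - 1.

From Stdlib Require Import Reals Lra Lia.
From Coquelicot Require Import Coquelicot.
Open Scope R_scope.

(* With m = k/2 (rounded down) and a_j = k - (2j - 1), one has
   F^k(x) = sum_{j <= m} 2x (cos (a_j pi / x) - 1) + k^2 - 1: the linear term
   -k x is absorbed by the -2x of each summand and, for odd k, by the extra x.
   A summand has derivative 2 (cos t - 1 + t sin t) with t = a_j pi / x, which
   is positive for 0 < t < pi/2, i.e. for x > 2 a_j; the largest a_j is k - 1. *)

Lemma cos_sub1_add_mul_sin_pos t : 0 < t < PI / 2 -> 0 < cos t - 1 + t * sin t.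
Proof.
  intros [Ht0 Ht1].
  set (s := t / 2).
  replace t with (2 * s) by (unfold s; field).
  rewrite sin_2a, cos_2a_sin.
  assert (Hsin : 0 < sin s) by (apply sin_gt_0; unfold s; lra).
  assert (Hsin_lt : sin s < s) by (apply sin_lt_x; unfold s; lra).
  assert (Hcos : 1 / 2 <= cos s).
  { rewrite <- cos_PI3. apply cos_decr_1; unfold s; lra. }
  (* the expression equals 2 sin s (2 s cos s - sin s) *)
  assert (0 < 2 * s * cos s - sin s) by nra.
  nra.
Qed.

Definition cos_defect (a x : R) : R := 2 * x * (cos (a * PI / x) - 1).

Lemma cos_defect_increasing a x y :
  0 < a -> 2 * a <= x -> x < y -> cos_defect a x < cos_defect a y.
Proof.
  intros Ha Hx Hxy.
  assert (HPI := PI_RGT_0).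
  destruct (MVT_cor2 (cos_defect a)
    (fun z => 2 * (cos (a * PI / z) - 1 + a * PI / z * sin (a * PI / z))) x y Hxy)
    as [c [Hdiff Hc]].
  { intros c Hc. apply is_derive_Reals. unfold cos_defect.
    auto_derive; [lra |]. unfold Rdiv. field. lra. }
  assert (Hpos : 0 < cos (a * PI / c) - 1 + a * PI / c * sin (a * PI / c)).
  { apply cos_sub1_add_mul_sin_pos. split.
    - apply Rdiv_lt_0_compat; nra.
    - apply (Rmult_lt_reg_r c); [lra |].
      unfold Rdiv. rewrite Rmult_assoc, Rinv_l by lra. nra. }
  nra.
Qed.

Definition cos_defect_sum (k : nat) (x : R) (m : nat) : R :=
  2 * x * cos_sum k x m - 2 * INR m * x.

Lemma cos_defect_sum_0 k x : cos_defect_sum k x 0 = 0.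
Proof. unfold cos_defect_sum. simpl. ring. Qed.

Lemma cos_defect_sum_S k x m :
  cos_defect_sum k x (S m) =
  cos_defect_sum k x m + cos_defect (INR k - (2 * INR (S m) - 1)) x.
Proof. unfold cos_defect_sum, cos_defect. cbn [cos_sum]. rewrite S_INR. ring. Qed.

Lemma cos_defect_sum_increasing k m x y :
  (2 * S m <= k)%nat -> 2 * (INR k - 1) <= x -> x < y ->
  cos_defect_sum k x (S m) < cos_defect_sum k y (S m).
Proof.
  intros Hm Hx Hxy.
  assert (Hterm : forall n, (2 * S n <= k)%nat ->
    cos_defect (INR k - (2 * INR (S n) - 1)) x <
    cos_defect (INR k - (2 * INR (S n) - 1)) y).
  { intros n Hn.
    apply le_INR in Hn. rewrite mult_INR in Hn.
    change (INR 2) with 2 in Hn. rewrite S_INR in Hn.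
    pose proof (pos_INR n).
    rewrite S_INR. apply cos_defect_increasing; lra. }
  induction m as [|m IH].
  - rewrite !cos_defect_sum_S, !cos_defect_sum_0. specialize (Hterm 0%nat Hm). lra.
  - rewrite (cos_defect_sum_S k x (S m)), (cos_defect_sum_S k y (S m)).
    specialize (Hterm (S m) Hm). specialize (IH ltac:(lia)). lra.
Qed.

Lemma Fk_cos_defect_sum k x :
  Fk k x = cos_defect_sum k x (Nat.div2 k) + (INR k ^ 2 - 1).
Proof.
  assert (HkR : INR k = 2 * INR (Nat.div2 k) + if Nat.even k then 0 else 1).
  { pose proof (Nat.div2_odd k) as Hk. rewrite <- Nat.negb_even in Hk.
    rewrite Hk at 1. rewrite plus_INR, mult_INR.
    destruct (Nat.even k); reflexivity. }
  unfold Fk, delta0, cos_defect_sum. rewrite HkR.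
  destruct (Nat.even k); ring.
Qed.

Theorem proposition3p1 (k : nat) (hk : (2 <= k)%nat) :
  forall x y : R, 2 * (INR k - 1) < x -> x < y -> Fk k x < Fk k y.
Proof.
  intros x y Hx Hxy.
  rewrite !Fk_cos_defect_sum.
  assert (Hhalf : (1 <= Nat.div2 k /\ 2 * Nat.div2 k <= k)%nat).
  { pose proof (Nat.div2_odd k). destruct (Nat.odd k); simpl in *; lia. }
  destruct (Nat.div2 k) as [|m]; [lia |].
  assert (cos_defect_sum k x (S m) < cos_defect_sum k y (S m)).
  { apply cos_defect_sum_increasing; lra || lia. }
  lra.
Qed.
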